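(* Let $n\ge1$. There exist constants $C>0$ and $\delta_0>0$ depending only on $n$ such that for every $0<\delta<\delta_0$, every $B\in M_\delta^+$ and every eigenvalue $\lambda$ of $B$, we have $\lambda\in N^+_{C\delta}$. In particular ${\rm Re}\,\lambda>0$.
   Context: Writing $z=x+iy$ with $x,y$ real: $N_\epsilon^+=\{z\in\mathbb C:|y|<\epsilon x\}$ and $M_\delta^+=\{z\in{\rm Mat}(n,\mathbb C): z^T=z,\ \delta x+y\text{ and }\delta x-y\text{ positive definite}\}$. *)

From HB Require Import structures.
From mathcomp Require Import all_boot all_order all_algebra.
From mathcomp Require Import reals.
From mathcomp.real_closed Require Import complex.
Set Implicit Arguments. Unset Strict Implicit. Unset Printing Implicit Defensive.
Import Order.TTheory GRing.Theory Num.Theory.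
Local Open Scope ring_scope.

Definition ReM (R : realType) (m n : nat) (z : 'M[complex R]_(m, n)) : 'M[R]_(m, n) :=
  map_mx (@complex.Re R) z.
Definition ImM (R : realType) (m n : nat) (z : 'M[complex R]_(m, n)) : 'M[R]_(m, n) :=
  map_mx (@complex.Im R) z.

Definition posdef (R : realType) (n : nat) (A : 'M[R]_n) : Prop :=
  A^T = A /\ forall v : 'cV[R]_n, v != 0 -> 0 < (v^T *m A *m v) 0 0.

Definition Nplus (R : realType) (eps : R) (z : complex R) : Prop :=
  `|complex.Im z| < eps * complex.Re z.

Definition Mplus (R : realType) (n : nat) (delta : R) (z : 'M[complex R]_n) : Prop :=
  z^T = z /\ posdef (delta *: ReM z + ImM z) /\ posdef (delta *: ReM z - ImM z).

(** The argument rests on the Hermitian form [v^* A v] of a real symmetric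
    matrix [A] at a complex vector [v = a + i b], which is the real number
    [a A a^T + b A b^T].  If [v B = lambda v] with [B = X + i Y] complex
    symmetric, splitting this equation into real and imaginary parts shows
    that [v^* X v = Re lambda |v|^2] and [v^* Y v = Im lambda |v|^2].  Hence
    [v^* (delta X +- Y) v = (delta Re lambda +- Im lambda) |v|^2], and positive
    definiteness of [delta X +- Y] gives [|Im lambda| < delta Re lambda].  So
    the conclusion holds with [C = 1], for every [delta > 0] and every [n]. *)

From HB Require Import structures.
From mathcomp Require Import all_boot all_order all_algebra.
From mathcomp Require Import reals.
From mathcomp.real_closed Require Import complex.
From mathcomp Require Import ring lra.
Import Order.TTheory GRing.Theory Num.Theory.
Local Open Scope ring_scope.

Section QuadraticForm.
Context {R : comNzRingType} {n : nat}.
Implicit Types (A X Y : 'M[R]_n) (u w a b : 'rV[R]_n).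

Definition qform A u w : R := (u *m A *m w^T) 0 0.

Lemma qform_sym A u w : A^T = A -> qform A u w = qform A w u.
Proof.
move=> symA; rewrite /qform -[u *m A *m w^T]trmxK [in LHS]mxE.
by rewrite !trmx_mul trmxK symA mulmxA.
Qed.

Lemma qformD A1 A2 u w : qform (A1 + A2) u w = qform A1 u w + qform A2 u w.
Proof. by rewrite /qform mulmxDr mulmxDl mxE. Qed.

Lemma qformN A u w : qform (- A) u w = - qform A u w.
Proof. by rewrite /qform mulmxN mulNmx mxE. Qed.

Lemma qformZ c A u w : qform (c *: A) u w = c * qform A u w.
Proof. by rewrite /qform -scalemxAr -scalemxAl mxE. Qed.

Lemma qform_realified_eigen X Y a b (p q : R) :
  X^T = X -> Y^T = Y ->
  a *m X - b *m Y = p *: a - q *: b ->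
  a *m Y + b *m X = p *: b + q *: a ->
  qform X a a + qform X b b = p * (qform 1 a a + qform 1 b b) /\
  qform Y a a + qform Y b b = q * (qform 1 a a + qform 1 b b).
Proof.
move=> symX symY eqRe eqIm.
have apply_form (M N : 'rV[R]_n) w : M = N -> (M *m w^T) 0 0 = (N *m w^T) 0 0.
  by move->.
have entryD (M N : 'M[R]_1) : (M + N) 0 0 = M 0 0 + N 0 0 by rewrite mxE.
have entryN (M : 'M[R]_1) : (- M) 0 0 = - M 0 0 by rewrite mxE.
have entryZ c (M : 'M[R]_1) : (c *: M) 0 0 = c * M 0 0 by rewrite mxE.
have := apply_form _ _ a eqRe; have := apply_form _ _ b eqRe.
have := apply_form _ _ a eqIm; have := apply_form _ _ b eqIm.
rewrite !(mulmxDl, mulNmx, entryD, entryN) -!scalemxAl !entryZ.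
have := qform_sym X a b symX; have := qform_sym Y b a symY.
have := qform_sym 1 b a (trmx1 R n); rewrite /qform !mulmx1.
move=> sym1 symYab symXab eIm_b eIm_a eRe_b eRe_a.
rewrite symYab sym1 in eRe_a; rewrite symXab in eRe_b; rewrite sym1 in eIm_a.
split.
- transitivity (((a *m X *m a^T) 0 0 - (a *m Y *m b^T) 0 0) +
                ((a *m Y *m b^T) 0 0 + (b *m X *m b^T) 0 0)); first by ring.
  by rewrite eRe_a eIm_b; ring.
- transitivity (((a *m Y *m a^T) 0 0 + (b *m X *m a^T) 0 0) -
                ((b *m X *m a^T) 0 0 - (b *m Y *m b^T) 0 0)); first by ring.
  by rewrite eIm_a eRe_b; ring.
Qed.

End QuadraticForm.

Section ComplexMatrices.
Context {R : realType}.
Implicit Types (m n p : nat).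

Lemma ReM_mul m n p (u : 'M[complex R]_(m, n)) (M : 'M[complex R]_(n, p)) :
  ReM (u *m M) = ReM u *m ReM M - ImM u *m ImM M.
Proof.
apply/matrixP => i j; rewrite !mxE raddf_sum -sumrB.
by apply: eq_bigr => k _; rewrite !mxE; case: (u i k) => ? ?; case: (M k j).
Qed.

Lemma ImM_mul m n p (u : 'M[complex R]_(m, n)) (M : 'M[complex R]_(n, p)) :
  ImM (u *m M) = ReM u *m ImM M + ImM u *m ReM M.
Proof.
apply/matrixP => i j; rewrite !mxE raddf_sum -big_split.
by apply: eq_bigr => k _; rewrite !mxE; case: (u i k) => ? ?; case: (M k j).
Qed.

Lemma ReM_scale m n (c : complex R) (u : 'M[complex R]_(m, n)) :
  ReM (c *: u) = complex.Re c *: ReM u - complex.Im c *: ImM u.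
Proof. by apply/matrixP => i j; rewrite !mxE; case: c; case: (u i j). Qed.

Lemma ImM_scale m n (c : complex R) (u : 'M[complex R]_(m, n)) :
  ImM (c *: u) = complex.Re c *: ImM u + complex.Im c *: ReM u.
Proof. by apply/matrixP => i j; rewrite !mxE; case: c; case: (u i j). Qed.

Lemma ReM_tr m n (z : 'M[complex R]_(m, n)) : ReM z^T = (ReM z)^T.
Proof. by rewrite /ReM map_trmx. Qed.

Lemma ImM_tr m n (z : 'M[complex R]_(m, n)) : ImM z^T = (ImM z)^T.
Proof. by rewrite /ImM map_trmx. Qed.

Lemma ReM_ImM_eq0 m n (z : 'M[complex R]_(m, n)) : ReM z = 0 -> ImM z = 0 -> z = 0.
Proof.
move=> /matrixP Re0 /matrixP Im0; apply/matrixP => i j.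
by move: (Re0 i j) (Im0 i j); rewrite !mxE; case: (z i j) => ? ? /= -> ->.
Qed.

End ComplexMatrices.

Section HermitianForm.
Context {R : realType} {n : nat}.
Implicit Types (A : 'M[R]_n) (v : 'rV[complex R]_n).

Definition hform A v : R := qform A (ReM v) (ReM v) + qform A (ImM v) (ImM v).

Lemma hformD A1 A2 v : hform (A1 + A2) v = hform A1 v + hform A2 v.
Proof. by rewrite /hform !qformD addrACA. Qed.

Lemma hformN A v : hform (- A) v = - hform A v.
Proof. by rewrite /hform !qformN opprD. Qed.

Lemma hformZ c A v : hform (c *: A) v = c * hform A v.
Proof. by rewrite /hform !qformZ mulrDr. Qed.

Lemma hform_eigen (B : 'M[complex R]_n) v lambda :
  B^T = B -> v *m B = lambda *: v ->
  hform (ReM B) v = complex.Re lambda * hform 1 v /\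
  hform (ImM B) v = complex.Im lambda * hform 1 v.
Proof.
move=> symB eigv; apply: qform_realified_eigen.
- by rewrite -ReM_tr symB.
- by rewrite -ImM_tr symB.
- by rewrite -ReM_mul eigv ReM_scale.
- by rewrite -ImM_mul eigv ImM_scale.
Qed.

Lemma posdef_qform_gt0 A (u : 'rV[R]_n) : posdef A -> u != 0 -> 0 < qform A u u.
Proof. by move=> [_ posA] u0; have := posA u^T; rewrite trmxK trmx_eq0; apply. Qed.

Lemma posdef_hform_gt0 A v : posdef A -> v != 0 -> 0 < hform A v.
Proof.
move=> posA v0.
have qform_ge0 u : 0 <= qform A u u.
  have [->|u0] := eqVneq u 0; last exact: ltW (posdef_qform_gt0 _ _ posA u0).
  by rewrite /qform !mul0mx mxE.
have [Re0|Re_neq0] := eqVneq (ReM v) 0.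
  have Im_neq0 : ImM v != 0 by apply: contra_neq v0; apply: ReM_ImM_eq0.
  by rewrite /hform ltr_wpDl // posdef_qform_gt0.
by rewrite /hform ltr_wpDr // posdef_qform_gt0.
Qed.

Lemma posdef1 : posdef (1 : 'M[R]_n).
Proof.
split=> [|w w0]; first exact: trmx1.
have sq_ge0 j : 0 <= w^T 0 j * w j 0 by rewrite mxE -expr2 sqr_ge0.
rewrite mulmx1 mxE lt_def sumr_ge0 ?andbT //; apply: contra_neq w0 => sum0.
apply/matrixP => i j; rewrite ord1 mxE.
have /eqP := psumr_eq0P (fun j _ => sq_ge0 j) sum0 (i := i) isT.
by rewrite mxE mulf_eq0 orbb => /eqP.
Qed.

End HermitianForm.

Theorem proposition6p2 (R : realType) (n : nat) (hn : (1 <= n)%N) :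
  exists C : R, exists delta0 : R, 0 < C /\ 0 < delta0 /\
    forall delta : R, 0 < delta -> delta < delta0 ->
    forall B : 'M[complex R]_n, Mplus delta B ->
    forall lambda : complex R, eigenvalue B lambda ->
      Nplus (C * delta) lambda /\ 0 < complex.Re lambda.
Proof.
exists 1, 1; do 2!split=> //.
move=> delta delta_gt0 _ B [symB [posP posM]] lambda /eigenvalueP [v eigv v0].
have [hRe hIm] := hform_eigen B v lambda symB eigv.
have norm_gt0 := posdef_hform_gt0 _ _ posdef1 v0.
have := posdef_hform_gt0 _ _ posP v0; have := posdef_hform_gt0 _ _ posM v0.
rewrite hformD hformN hformZ hRe hIm mulrA -mulrBl pmulr_lgt0 // => gt0_minus.
rewrite hformD hformZ hRe hIm mulrA -mulrDl pmulr_lgt0 // => gt0_plus.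
have Re_gt0 : 0 < delta * complex.Re lambda by lra.
rewrite /Nplus mul1r ltr_norml -(pmulr_rgt0 _ delta_gt0).
by do ?split; lra.
Qed.
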